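(* Let $G$ be a graph, $\ell\ge 1$, and let $B\subseteq V(G)$ be an $(\ell-1)$-leaky forcing set of $G$. If $L$ is a set of $k\ge \ell$ specified leaks, then $|L-B^{[\infty]}_L|\le k-\ell$, where for $S\subseteq V(G)$, $L-S=\{x\to y\in L: x\notin S\}$.
   Context: All graphs are finite, simple and undirected. Zero forcing: a blue vertex $u$ with exactly one white neighbor $w$ may force $w$ (color it blue), written $u\to w$. A vertex leak is a vertex not allowed to perform any force; $B$ is an $\ell$-leaky forcing set if for every set of at most $\ell$ vertex leaks, exhaustively applying the forcing rule from initial blue set $B$ colors all of $V(G)$ blue (a $0$-leaky forcing set is a zero forcing set). A specified leak is an ordered pair $x\to y$ indicating that $x$ (the tail) is prohibited from forcing $y$ (the head). For a set $L$ of specified leaks, $B^{[\infty]}_L$ is the set of blue vertices obtained from $B$ after exhaustively applying the forcing rule while never performing a force in $L$ (independent of the order of forces). *)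

From mathcomp Require Import all_boot.
Set Implicit Arguments. Unset Strict Implicit. Unset Printing Implicit Defensive.

Definition simple_graph (T : finType) (e : rel T) : Prop :=
  symmetric e /\ irreflexive e.

Definition force_step (T : finType) (e : rel T) (allowed : T -> T -> bool)
    (S : {set T}) : {set T} :=
  S :|: [set w | [exists u, [&& u \in S, e u w, w \notin S, allowed u w &
                   [forall v, (e u v && (v != w)) ==> (v \in S)]]]].

(* Exhaustive application of the (restricted) forcing rule; #|T| rounds
   suffice since each non-final round adds a vertex. *)
Definition closure (T : finType) (e : rel T) (allowed : T -> T -> bool)
    (B : {set T}) : {set T} :=
  iter #|T| (force_step e allowed) B.

(* B^{[oo]}_L for a set L of specified leaks (ordered pairs (x,y) = x -> y). *)
Definition spec_closure (T : finType) (e : rel T) (L : {set T * T})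
    (B : {set T}) : {set T} :=
  closure e (fun u w => (u, w) \notin L) B.

Definition leaky_forcing_set (T : finType) (e : rel T) (l : nat)
    (B : {set T}) : Prop :=
  forall X : {set T}, #|X| <= l ->
    closure e (fun u _ => u \notin X) B = [set: T].

Definition leaks_minus (T : finType) (L : {set T * T}) (S : {set T})
    : {set T * T} :=
  [set p in L | p.1 \notin S].

From Pilot Require Import Defs.
From mathcomp Require Import all_boot.
From mathcomp Require Import zify.
Set Implicit Arguments. Unset Strict Implicit. Unset Printing Implicit Defensive.

(* Proof of Proposition 3.3.  Write S for the closure B^[oo]_L, split L into
   the leaks L - S (tail outside S) and the leaks M with tail in S, and let
   X be the set of tails of M, so #|X| <= #|M|.
   - If #|X| >= l, then #|L - S| = k - #|M| <= k - #|X| <= k - l.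
   - If #|X| <= l - 1, treat X as a set of vertex leaks.  Every force u -> w
     from a vertex u of S not in X is not a specified leak, so S is closed
     under forcing with vertex leaks X; by minimality of closures this
     forcing process stays inside S.  Since B is (l-1)-leaky, it colours
     everything, so S = V(G) and L - S is empty. *)

Section ForcingClosure.

Variables (T : finType) (e : rel T).

Lemma force_step_ext (a : T -> T -> bool) (S : {set T}) :
  S \subset force_step e a S.
Proof. exact: subsetUl. Qed.

Lemma closure_ext (a : T -> T -> bool) (B : {set T}) :
  B \subset Defs.closure e a B.
Proof.
rewrite /Defs.closure; elim: #|T| => [|n IH] //=.
exact: subset_trans IH (force_step_ext _ _).
Qed.

Lemma iter_force_step_grows (a : T -> T -> bool) (B : {set T}) (i : nat) :
  let f := force_step e a in
  f (iter i f B) = iter i f B \/ i < #|iter i.+1 f B|.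
Proof.
move=> f; elim: i => [|i IH].
  have [-> | ne] := eqVneq (f B) B; [by left | right].
  have /proper_card grow : B \proper f B
    by rewrite properEneq eq_sym ne force_step_ext.
  by rewrite /=; lia.
case: IH => [fix_i | lt_i]; first by left; rewrite /= fix_i fix_i.
have [-> | ne] := eqVneq (f (iter i.+1 f B)) (iter i.+1 f B); [by left | right].
have /proper_card grow : iter i.+1 f B \proper f (iter i.+1 f B)
  by rewrite properEneq eq_sym ne force_step_ext.
by change (i.+1 < #|f (iter i.+1 f B)|); lia.
Qed.

Lemma closure_fixpoint (a : T -> T -> bool) (B : {set T}) :
  force_step e a (Defs.closure e a B) = Defs.closure e a B.
Proof.
case: (iter_force_step_grows a B #|T|) => // too_big.
have := subset_leq_card (subsetT (iter #|T|.+1 (force_step e a) B)).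
by rewrite cardsT; lia.
Qed.

Lemma force_step_mono (a a' : T -> T -> bool) (S S' : {set T}) :
  S \subset S' -> (forall u w, u \in S -> a u w -> a' u w) ->
  force_step e a S \subset force_step e a' S'.
Proof.
move=> /subsetP sub_SS' aa'; apply/subsetP => w.
rewrite !inE => /orP [/sub_SS' -> // | /existsP [u /and5P [uS euw _ auw unique]]].
have [// | wS'] := boolP (w \in S'); rewrite orFb.
apply/existsP; exists u; rewrite sub_SS' ?euw ?wS' ?aa' //=.
apply/forallP => v; apply/implyP => /(implyP (forallP unique v)).
exact: sub_SS'.
Qed.

Lemma closure_min (a a' : T -> T -> bool) (B F : {set T}) :
  B \subset F -> force_step e a' F = F ->
  (forall u w, u \in F -> a u w -> a' u w) ->
  Defs.closure e a B \subset F.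
Proof.
move=> BF closedF aa'; rewrite /Defs.closure; elim: #|T| => [|n IH] //=.
rewrite -closedF; apply: force_step_mono => // u w /(subsetP IH).
exact: aa'.
Qed.

End ForcingClosure.

Definition leaks_within (T : finType) (L : {set T * T}) (S : {set T})
    : {set T * T} :=
  [set p in L | p.1 \in S].

Lemma card_leaks_split (T : finType) (L : {set T * T}) (S : {set T}) :
  #|leaks_minus L S| + #|leaks_within L S| = #|L|.
Proof.
rewrite -(cardsID [set p : T * T | p.1 \in S] L) addnC.
by congr (_ + _); apply: eq_card => p; rewrite !inE andbC.
Qed.

Lemma tail_leaks_restrict (T : finType) (L : {set T * T}) (S : {set T}) u w :
  u \in S -> u \notin [set p.1 | p in leaks_within L S] -> (u, w) \notin L.
Proof.
move=> uS uX; apply: contra uX => uwL.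
by apply/imsetP; exists (u, w); rewrite // inE uwL uS.
Qed.

Theorem proposition3p3 (T : finType) (e : rel T) (l k : nat)
    (B : {set T}) (L : {set T * T}) :
  simple_graph e ->
  1 <= l ->
  leaky_forcing_set e l.-1 B ->
  (forall p, p \in L -> e p.1 p.2) ->
  #|L| = k ->
  l <= k ->
  #|leaks_minus L (spec_closure e L B)| <= k - l.
Proof.
move=> _ l_ge1 leakyB _ card_L l_le_k.
set S := spec_closure e L B.
set X := [set p.1 | p in leaks_within L S].
have split_L := card_leaks_split L S; rewrite card_L in split_L.
have X_le_M : #|X| <= #|leaks_within L S| := leq_imset_card _ _.
have [X_small | X_big] := leqP #|X| l.-1; last by lia.
have X_inside_S : Defs.closure e (fun u _ => u \notin X) B \subset S.
  apply: closure_min; first exact: closure_ext.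
    exact: closure_fixpoint.
  by move=> u w uS; apply: tail_leaks_restrict.
have S_full : S = [set: T].
  by apply/eqP; rewrite eqEsubset subsetT -(leakyB X X_small).
have -> : leaks_minus L S = set0.
  by apply/setP => p; rewrite !inE S_full inE andbF.
by rewrite cards0.
Qed.
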